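(* Let $T$ be a tree with $n\ge 2$ vertices and let $(u,v)$ be an edge of $T$. Then $$\frac{F(T_v)}{F(T_u)}=\frac{|T_u(v)|}{|T_v(u)|}=\frac{|T_u(v)|}{n-|T_u(v)|}.$$
   Context: For a finite undirected graph $G=(V,E)$, a shelling of $G$ is a total ordering $\sigma(1),\ldots,\sigma(|E|)$ of $E$ such that for every $k$ the edges $\sigma(1),\ldots,\sigma(k)$ form a connected subgraph. For a tree $T$ and a vertex $v$, $T_v$ denotes $T$ rooted at $v$, and a shelling of $T_v$ is a shelling $\sigma$ of $T$ whose first edge $\sigma(1)$ is incident to $v$; $F(T_v)$ is the number of shellings of $T_v$. In $T_v$, a vertex $w$ is a descendant of $u$ if $u$ lies on the unique path from $v$ to $w$ (including $w=u$). $T_v(u)$ is the subtree of $T$ induced by all descendants of $u$ in $T_v$, and $|T_v(u)|$ is its number of vertices. *)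

From mathcomp Require Import all_boot all_order all_algebra.
Set Implicit Arguments. Unset Strict Implicit. Unset Printing Implicit Defensive.

Definition simple_graph (V : finType) (e : rel V) : Prop :=
  symmetric e /\ irreflexive e.

Definition is_tree (V : finType) (e : rel V) : Prop :=
  simple_graph e /\
  (forall x y : V, connect e x y) /\
  (forall p : seq V, ~~ [&& 2 < size p, uniq p & cycle e p]).

Definition edges (V : finType) (e : rel V) : {set {set V}} :=
  [set [set x; y] | x in V, y in V & e x y].

Definition edges_connected (V : finType) (es : seq {set V}) : bool :=
  [forall x : V, forall y : V,
     ((x \in \bigcup_(f <- es) f) && (y \in \bigcup_(f <- es) f)) ==>
     connect (fun a b => [set a; b] \in es) x y].

Definition is_shelling (V : finType) (e : rel V) (s : seq {set V}) : bool :=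
  [&& uniq s, perm_eq s (enum (edges e)) &
      all (fun k => edges_connected (take k s)) (iota 0 (size s).+1)].

(* F(T_v): number of shellings whose first edge is incident to v. *)
Definition Fshell (V : finType) (e : rel V) (v : V) : nat :=
  #|[pred t : (#|edges e|).-tuple {set V} |
      is_shelling e (tval t) && (v \in head set0 (tval t))]|.

(* A path from v to w is a duplicate-free walk v :: p (so size p < #|V|,
   which makes the existential quantifier finite/boolean). *)
Definition descendant (V : finType) (e : rel V) (v u w : V) : bool :=
  [exists k : 'I_#|V|, exists p : k.-tuple V,
     [&& path e v (tval p), last v (tval p) == w, uniq (v :: tval p)
       & u \in v :: tval p]].

Definition subtree_size (V : finType) (e : rel V) (v u : V) : nat :=
  #|[set w | descendant e v u w]|.

(* A shelling of T_v is an ordering of the edges in which every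
   edge meets v or an earlier edge.  Deleting the edge uv splits T into the
   component A of u and the component B of v, with a and b edges, so that
   T has m = a + b + 1 edges.  Filtering a shelling of T_v to the edges of B
   gives a shelling of B from v, and filtering it to uv and the edges of A
   gives uv followed by a shelling of A from u; conversely every interleaving
   of two such sequences is a shelling of T_v.  Hence
   F(T_v) = C(m, a+1) X Y, and symmetrically F(T_u) = C(m, b+1) X Y, where X
   and Y count the shellings of A from u and of B from v.  As a forest
   component has one edge fewer than vertices, |T_v(u)| = |A| = a + 1 and
   |T_u(v)| = |B| = b + 1, and it can be shelled from any of its vertices, so
   X, Y > 0.  The identity (a+1) C(m, a+1) = (b+1) C(m, b+1) gives the first
   equality, and |A| + |B| = n the second. *)

From mathcomp Require Import all_boot all_order all_algebra.
From mathcomp Require Import ring.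
Set Implicit Arguments. Unset Strict Implicit. Unset Printing Implicit Defensive.

Lemma binS_pred n k : 'C(n, k.-1) * (0 < k) + 'C(n, k) = 'C(n.+1, k).
Proof. by case: k => [|k]; rewrite ?bin0 // muln1 addnC. Qed.

Lemma mul_bin_swap a b : 'C((a + b).+1, a.+1) * a.+1 = 'C((a + b).+1, b.+1) * b.+1.
Proof.
rewrite ![_ * _.+1]mulnC -!mul_bin_diag /=; congr (_ * _).
by rewrite -bin_sub ?leq_addr // addKn.
Qed.

Section Arrangements.
Variable T : finType.
Implicit Types (R : {set T}) (P Q : seq T -> bool).

Fixpoint narr n R P : nat :=
  if n is n'.+1 then \sum_(f in R) narr n' (R :\ f) (fun s => P (f :: s))
  else P [::].

Lemma eq_narr_in n R P1 P2 :
  (forall s, all [in R] s -> P1 s = P2 s) -> narr n R P1 = narr n R P2.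
Proof.
elim: n R P1 P2 => [|n IH] R P1 P2 eqP12 /=; first by rewrite eqP12.
apply: eq_bigr => f fR; apply: IH => s sR; apply: eqP12 => /=.
by rewrite fR; apply: sub_all sR => x; rewrite !inE => /andP[].
Qed.

Lemma narr_pred0 n R : narr n R (fun _ => false) = 0.
Proof. by elim: n R => [|n IH] R //=; rewrite big1. Qed.

Lemma narr_gt0 s R P : uniq s -> [set x in s] = R -> P s -> 0 < narr (size s) R P.
Proof.
elim: s R P => [|f s IH] R P; first by move=> _ _ /= ->.
move=> /= /andP[fs us] sR Ps.
have fR : f \in R by rewrite -sR inE mem_head.
rewrite (bigD1 f) //= ltn_addr // IH //.
by apply/setP => x; rewrite -sR !inE; case: eqP => [->|] //=; rewrite (negPf fs).
Qed.

Lemma narr_sum_head R P :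
  \sum_(f in R) narr #|R|.-1 (R :\ f) (fun s => P (f :: s)) = (0 < #|R|) * narr #|R| R P.
Proof.
have [/eqP|] := posnP #|R|; last by case: #|R| => //= k _; rewrite mul1n.
by rewrite cards_eq0 => /eqP->; rewrite big_set0.
Qed.

Lemma card_tupleS n (A : pred (n.+1.-tuple T)) :
  #|A| = \sum_(h : T) #|[pred t : n.-tuple T | [tuple of h :: t] \in A]|.
Proof.
rewrite -sum1_card big_mkcond /=.
rewrite (reindex (fun p : T * n.-tuple T => [tuple of p.1 :: p.2])) /=; last first.
  exists (fun t : n.+1.-tuple T => (thead t, behead_tuple t)).
    by case=> h t _; congr (_, _); apply: val_inj.
  by move=> t _; apply: val_inj; case: t => [[|x s]].
rewrite -(pair_bigA _ (fun (h : T) (t : n.-tuple T) =>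
  if [tuple of h :: t] \in A then 1 else 0)).
by apply: eq_bigr => h _; rewrite -sum1_card [RHS]big_mkcond.
Qed.

Lemma perm_cons_enum (h : T) (t : seq T) R :
  perm_eq (h :: t) (enum R) = (h \in R) && perm_eq t (enum (R :\ h)).
Proof.
case hR: (h \in R); last first.
  by apply/negP => /perm_mem/(_ h); rewrite mem_head mem_enum hR.
suff /permPr -> : perm_eq (enum R) (h :: enum (R :\ h)) by rewrite perm_cons.
apply: uniq_perm; rewrite /= ?mem_enum ?enum_uniq ?setD11 // => x.
by rewrite inE !mem_enum !inE; case: eqP => [->|].
Qed.

Lemma narrE n R P : #|R| = n ->
  narr n R P = #|[pred t : n.-tuple T | perm_eq t (enum R) && P t]|.
Proof.
elim: n R P => [|n IH] R P cardR /=.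
  have -> : R = set0 by apply/eqP; rewrite -cards_eq0 cardR.
  case: (boolP (P [::])) => P0.
    by rewrite (eq_card (B := predT)) ?card_tuple // => t; rewrite tuple0 enum_set0 !inE P0.
  by rewrite eq_card0 // => t; rewrite tuple0 !inE (negPf P0) andbF.
rewrite card_tupleS big_mkcond /=; apply: eq_bigr => h _.
case: ifP => hR; last by apply/esym/eq_card0 => t; rewrite !inE perm_cons_enum hR.
rewrite IH; last by move: cardR; rewrite (cardsD1 h) hR => -[].
by apply: eq_card => t; rewrite !inE perm_cons_enum hR.
Qed.

Lemma narr_setU1 n g R P : g \notin R -> {in R, forall f (s : seq T), ~~ P (f :: s)} ->
  narr n.+1 (g |: R) P = narr n R (fun s => P (g :: s)).
Proof.
move=> gR P_R; rewrite /= (bigD1 g) ?setU11 //= setU1K // big1 ?addn0 // => f.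
case/andP=> /setU1P[-> | fR]; first by rewrite eqxx.
move=> _; rewrite -(narr_pred0 n ((g |: R) :\ f)).
by apply: eq_narr_in => s _; apply/negbTE/P_R.
Qed.

Lemma narr_shuffle (S : {set T}) n R P Q : #|R| = n ->
  narr n R (fun s => P [seq x <- s | x \in S] && Q [seq x <- s | x \notin S]) =
  'C(n, #|R :&: S|) * narr #|R :&: S| (R :&: S) P * narr #|R :\: S| (R :\: S) Q.
Proof.
elim: n R P Q => [|n IH] R P Q cardR.
  have R0 : R = set0 by apply/eqP; rewrite -cards_eq0 cardR.
  by rewrite R0 set0I set0D cards0 /= bin0 mul1n mulnb.
have cardRS f : f \in R -> #|R :\ f| = n.
  by move=> fR; move: cardR; rewrite (cardsD1 f) fR => -[].
have head_in f : f \in R :&: S ->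
    narr n (R :\ f)
      (fun s => P [seq x <- f :: s | x \in S] && Q [seq x <- f :: s | x \notin S])
    = 'C(n, #|R :&: S|.-1) * narr #|R :&: S|.-1 (R :&: S :\ f) (fun s => P (f :: s))
      * narr #|R :\: S| (R :\: S) Q.
  move=> fRS; have /setIP[fR fS] := fRS.
  rewrite (eq_narr_in _ (P2 := fun s => (fun a => P (f :: a)) [seq x <- s | x \in S]
                                       && Q [seq x <- s | x \notin S])); last by rewrite /= fS.
  rewrite (IH _ (fun a => P (f :: a))) ?cardRS // setIDAC setDDl (setUidPr _) ?sub1set //.
  by rewrite (cardsD1 f (R :&: S)) fRS.
have head_out f : f \in R :\: S ->
    narr n (R :\ f)
      (fun s => P [seq x <- f :: s | x \in S] && Q [seq x <- f :: s | x \notin S])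
    = 'C(n, #|R :&: S|) * narr #|R :&: S| (R :&: S) P
      * narr #|R :\: S|.-1 (R :\: S :\ f) (fun s => Q (f :: s)).
  move=> fRS; have /setDP[fR fS] := fRS.
  rewrite (eq_narr_in _ (P2 := fun s => P [seq x <- s | x \in S]
                                       && (fun a => Q (f :: a)) [seq x <- s | x \notin S]));
    last by rewrite /= (negPf fS).
  rewrite (IH _ _ (fun a => Q (f :: a))) ?cardRS // setDDl setUC -setDDl setIDAC.
  rewrite (setDidPl _); last by rewrite disjoint_sym disjoints1 inE (negPf fS) andbF.
  by rewrite (cardsD1 f (R :\: S)) fRS.
rewrite /= (big_setID S) (eq_bigr _ head_in) (eq_bigr _ head_out).
rewrite -!big_distrl -!big_distrr /= !narr_sum_head -binS_pred.
have binRS : 'C(n, #|R :&: S|) * (0 < #|R :\: S|) = 'C(n, #|R :&: S|).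
  have := cardsID S R; rewrite cardR; case: #|R :\: S| => [|l] /= cardRSN.
    by rewrite addn0 in cardRSN; rewrite cardRSN bin_small ?muln0.
  by rewrite muln1.
by rewrite !mulnA (mulnAC _ _ (0 < #|R :\: S|)) binRS !mulnDl.
Qed.

End Arrangements.

Section Attached.
Variable T : finType.
Implicit Types (W X WA WB f g : {set T}) (s : seq {set T}).

Fixpoint attached W s : bool :=
  if s is f :: s' then (f :&: W != set0) && attached (W :|: f) s' else true.

Lemma attached_rcons W s g :
  attached W (rcons s g) = attached W s && (g :&: (W :|: \bigcup_(f <- s) f) != set0).
Proof.
elim: s W => [|f s IH] W /=; first by rewrite big_nil setU0 andbT.
by rewrite IH big_cons setUA andbA.
Qed.

Lemma attached_setU1 (x : T) W s : {in s, forall f : {set T}, x \notin f} ->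
  attached (x |: W) s = attached W s.
Proof.
elim: s W => [|f s IH] W //= xs.
rewrite -setUA IH => [|g gs]; last by apply: xs; rewrite inE gs orbT.
suff -> : f :&: (x |: W) = f :&: W by [].
rewrite setIUr (_ : f :&: [set x] = set0) ?set0U //.
by apply/disjoint_setI0; rewrite disjoint_sym disjoints1 xs ?mem_head.
Qed.

Lemma setIU_sub f WA WB : f :&: WB \subset WA -> f :&: (WA :|: WB) = f :&: WA.
Proof.
move=> fWB; rewrite setIUr; apply/setUidPl.
by rewrite subsetI subsetIl fWB.
Qed.

Lemma attached_split (S : {set {set T}}) X s WA WB :
  X \subset WA -> X \subset WB ->
  {in s &, forall f g, f \in S -> g \notin S -> f :&: g \subset X} ->
  {in s, forall f, f \in S -> f :&: WB \subset WA} ->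
  {in s, forall f, f \notin S -> f :&: WA \subset WB} ->
  attached (WA :|: WB) s =
  attached WA [seq f <- s | f \in S] && attached WB [seq f <- s | f \notin S].
Proof.
elim: s WA WB => [|f s IH] //= WA WB XA XB sepS inS outS.
have sepS' : {in s &, forall f g, f \in S -> g \notin S -> f :&: g \subset X}.
  by move=> g h gs hs; apply: sepS; rewrite inE ?gs ?hs orbT.
have fs : f \in f :: s by rewrite mem_head.
have sub_s g : g \in s -> g \in f :: s by rewrite inE => ->; rewrite orbT.
case: (boolP (f \in S)) => fS /=.
  rewrite setIU_sub ?inS // setUAC IH -?andbA //.
  - exact: subset_trans XA (subsetUl _ _).
  - by move=> g gs gS; apply: subset_trans (inS _ (sub_s _ gs) gS) (subsetUl _ _).
  move=> g gs gS; rewrite setIUr subUset outS ?sub_s //=.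
  by rewrite setIC (subset_trans (sepS _ _ fs (sub_s _ gs) fS gS)).
rewrite (setUC WA) setIU_sub ?outS // setUAC setUC IH //.
- by rewrite andbCA.
- exact: subset_trans XB (subsetUl _ _).
- move=> g gs gS; rewrite setIUr subUset inS ?sub_s //=.
  by rewrite (subset_trans (sepS _ _ (sub_s _ gs) fs gS fS)).
by move=> g gs gS; apply: subset_trans (outS _ (sub_s _ gs) gS) (subsetUl _ _).
Qed.

End Attached.

Section Shellings.
Variable T : finType.
Implicit Types (s p : seq {set T}) (f g : {set T}).

Lemma mem_bigcup_seq (x : T) s : (x \in \bigcup_(f <- s) f) = has (fun f => x \in f) s.
Proof. by rewrite bigcup_seq; apply/bigcupP/hasP => -[f]; exists f. Qed.

Lemma bigcup_rcons s g : \bigcup_(f <- rcons s g) f = \bigcup_(f <- s) f :|: g.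
Proof. by rewrite big_rcons. Qed.

Lemma edges_connected_nil : edges_connected ([::] : seq {set T}).
Proof. by apply/forallP => x; apply/forallP => y; rewrite big_nil inE. Qed.

Lemma edges_connected1 (a b : T) : edges_connected [:: [set a; b]].
Proof.
apply/forallP => x; apply/forallP => y; apply/implyP.
rewrite big_seq1 => /andP[xab yab]; have [->|xy] := eqVneq x y; first exact: connect0.
apply: connect1; rewrite inE; move: xab yab xy; rewrite !inE.
by move=> /orP[]/eqP-> /orP[]/eqP->; rewrite ?eqxx // setUC.
Qed.

Lemma edges_connected_rcons p (a b : T) :
  \bigcup_(f <- p) f != set0 -> edges_connected p ->
  edges_connected (rcons p [set a; b]) = ([set a; b] :&: \bigcup_(f <- p) f != set0).
Proof.
set U := \bigcup_(f <- p) f; set r := fun x y => [set x; y] \in rcons p [set a; b].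
have in_U x y : [set x; y] \in p -> (x \in U) && (y \in U).
  by move=> xyp; rewrite !mem_bigcup_seq; apply/andP; split; apply/hasP;
    exists [set x; y]; rewrite ?set21 ?set22.
move=> /set0Pn[c cU] /forallP p_conn; rewrite /edges_connected bigcup_rcons.
apply/idP/idP => [/forallP r_conn | /set0Pn[z /setIP[zab zU]]].
  apply: contraT; rewrite negbK => /eqP abU.
  have notU x : x \in [set a; b] -> x \notin U.
    by move=> xab; apply/negP => xU; have := in_set0 x; rewrite -abU inE xab xU.
  have cl : closed r [set a; b].
    move=> x y; rewrite /r mem_rcons inE => /predU1P[xy | /in_U/andP[xU yU]].
      by rewrite -xy set21 set22.
    by rewrite (negPf (contraTN (notU x) xU)) (negPf (contraTN (notU y) yU)).
  have /forallP/(_ c)/implyP := r_conn a; rewrite !inE eqxx cU orbT => /(_ isT).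
  by move/(closed_connect cl); rewrite set21 => /esym/notU; rewrite cU.
have to_z x : x \in U :|: [set a; b] -> connect r x z.
  rewrite inE => /orP[xU | xab].
    have /forallP/(_ z)/implyP := p_conn x; rewrite xU zU => /(_ isT).
    by apply: connect_sub => y w ywp; apply: connect1; rewrite /r mem_rcons inE ywp orbT.
  have [->|xz] := eqVneq x z; first exact: connect0.
  apply: connect1; rewrite /r mem_rcons inE; apply/orP; left.
  by move: xab zab xz; rewrite !inE => /orP[]/eqP-> /orP[]/eqP->; rewrite ?eqxx // setUC.
have rsym : connect_sym r by apply: sym_connect_sym => x y; rewrite /r setUC.
apply/forallP => x; apply/forallP => y; apply/implyP => /andP[/to_z xz /to_z yz].
by apply: connect_trans xz _; rewrite rsym.
Qed.

Definition prefix_connected s : bool :=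
  all (fun k => edges_connected (take k s)) (iota 0 (size s).+1).

Lemma prefix_connected_conn s : prefix_connected s -> edges_connected s.
Proof. by move/allP/(_ (size s)); rewrite mem_iota ltnSn take_size => ->. Qed.

Lemma prefix_connected_rcons s g :
  prefix_connected (rcons s g) = prefix_connected s && edges_connected (rcons s g).
Proof.
rewrite /prefix_connected size_rcons -addn1 iotaD all_cat /= andbT !take0.
rewrite add0n take_oversize ?size_rcons //; congr (_ && _ && _).
apply: eq_in_all => k; rewrite mem_iota add1n ltnS => /andP[_ kle].
by rewrite -cats1 takel_cat.
Qed.

Lemma prefix_connected_attached (v : T) s : s != [::] ->
  {in s, forall f, exists a b, f = [set a; b]} ->
  prefix_connected s && (v \in head set0 s) = attached [set v] s.
Proof.
elim/last_ind: s => [|t g IH] // _ pair_s.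
have [a [b gE]] : exists a b, g = [set a; b] by apply: pair_s; rewrite mem_rcons mem_head.
have [-> | t0] := eqVneq t [::].
  rewrite /prefix_connected /= andbT edges_connected_nil gE.
  by rewrite edges_connected1 andbT setI_eq0 disjoint_sym disjoints1 negbK andbT.
rewrite prefix_connected_rcons attached_rcons -IH // => [|f ft]; last first.
  by apply: pair_s; rewrite mem_rcons inE ft orbT.
have -> : head set0 (rcons t g) = head set0 t by case: t t0 {IH pair_s}.
case: (boolP (prefix_connected t)) => //= /prefix_connected_conn t_conn.
case: (boolP (v \in head set0 t)); rewrite ?andbF // => vt.
have vU : v \in \bigcup_(f <- t) f.
  by case: t t0 {IH pair_s t_conn} vt => //= f t _ vf; rewrite big_cons inE vf.
rewrite gE edges_connected_rcons ?andbT //; last by apply/set0Pn; exists v.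
by rewrite (setUidPr (A := [set v]) _) ?sub1set.
Qed.

End Shellings.

Lemma edgesP (V : finType) (r : rel V) (f : {set V}) :
  reflect (exists x y, r x y /\ f = [set x; y]) (f \in edges r).
Proof.
apply: (iffP imset2P) => [[x y _]|[x [y [rxy ->]]]].
  by rewrite inE => /andP[_ rxy] ->; exists x, y.
by exists x y; rewrite ?inE.
Qed.

Lemma Fshell_narr (V : finType) (e : rel V) (x : V) : 0 < #|edges e| ->
  Fshell e x = narr #|edges e| (edges e) (attached [set x]).
Proof.
move=> m_gt0; rewrite /Fshell narrE //; apply: eq_card => t; rewrite !inE /is_shelling.
case t_perm: (perm_eq t (enum (edges e))); rewrite ?andbF //=.
rewrite (perm_uniq t_perm) enum_uniq /= prefix_connected_attached //.
  by apply: contraTneq m_gt0 => t0; rewrite -(size_tuple t) t0.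
move=> f ft; have : f \in edges e by rewrite -mem_enum -(perm_mem t_perm).
by case/edgesP => a [b [_ ->]]; exists a, b.
Qed.

Section Forest.
Variables (V : finType) (r : rel V).
Hypotheses (r_sym : symmetric r) (r_irr : irreflexive r).
Hypothesis r_acyclic : forall p : seq V, ~~ [&& 2 < size p, uniq p & cycle r p].
Implicit Types (W : {set V}) (s : seq {set V}).

Definition induced W := [rel x y | [&& r x y, x \in W & y \in W]].

Definition edges_in W := [set f in edges r | f \subset W].

Lemma induced_sym W : symmetric (induced W).
Proof. by move=> x y /=; rewrite r_sym (andbC (x \in W)). Qed.

Lemma induced_path_in W x p : path (induced W) x p -> all [in W] p.
Proof. by elim: p x => //= y p IH x /andP[/and3P[_ _ ->] /IH]. Qed.

Lemma unique_neighbour W b a z :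
  b \notin W -> connect (induced W) a z -> r b a -> r b z -> a = z.
Proof.
move=> bW /connectP[p p_path ->] rba.
case/shortenP: p_path => [[|c q]] //= /andP[/and3P[rac aW cW] q_path] acq_uniq _ rbz.
case/negP: (r_acyclic [:: b, a, c & q]) => /=.
have b_out : b \notin [:: a, c & q].
  apply: contra bW; rewrite !inE => /or3P[/eqP-> | /eqP-> | bq] //.
  by move/allP: (induced_path_in q_path); apply.
rewrite b_out acq_uniq rba rac rcons_path -r_sym rbz !andbT /=.
by apply: sub_path q_path => x y /andP[].
Qed.

Lemma connect_exit W u x : u \in W -> x \notin W -> connect r u x ->
  exists a b, [/\ a \in W, b \notin W & r a b].
Proof.
move=> uW xW /connectP[p p_path x_last]; rewrite x_last {x x_last} in xW.
elim: p u uW p_path xW => [|y p IH] a aW /=.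
  by rewrite aW.
case/andP=> ray p_path; case: (boolP (y \in W)) => [yW | yW _]; last by exists a, y.
exact: IH.
Qed.

Lemma edges_in_setU1 W a b : {in W &, forall x y, connect (induced W) x y} ->
  a \in W -> b \notin W -> r a b -> edges_in (b |: W) = [set a; b] |: edges_in W.
Proof.
move=> W_conn aW bW rab; apply/setP => f; rewrite !inE.
have [-> | f_ne] := eqVneq f [set a; b].
  by rewrite /= subUset !sub1set !inE eqxx aW orbT /= andbT; apply/edgesP; exists a, b.
case: (boolP (f \in edges r)) => //= /edgesP[x [y [rxy fE]]].
rewrite fE !subUset !sub1set !inE.
have only_a z : z \in W -> r b z -> z = a.
  by move=> zW rbz; apply/esym/(unique_neighbour bW (W_conn a z aW zW)); rewrite // r_sym.
case: (eqVneq x b) => [xb | _] /=; case: (eqVneq y b) => [yb | _] //=.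
- by move: rxy; rewrite xb yb r_irr.
- rewrite xb (negPf bW); apply/negbTE/negP => yW.
  have ya : y = a by apply: only_a; rewrite -?xb.
  by move: f_ne; rewrite fE xb ya setUC eqxx.
- rewrite yb (negPf bW) andbT andbF; apply/negbTE/negP => xW.
  have xa : x = a by apply: only_a; rewrite // -yb r_sym.
  by move: f_ne; rewrite fE yb xa eqxx.
Qed.

Definition component u := [set w | connect r u w].

(* Grow a connected W around u one boundary vertex b at a time: by acyclicity
   the boundary edge ab is the only edge from b into W, so the edge sequence s
   stays an enumeration of the edges inside W. *)
Lemma forest_grow u k : k < #|component u| ->
  exists W s, [/\ u \in W, W \subset component u, #|W| = k.+1,
    {in W &, forall x y, connect (induced W) x y} &
    [/\ uniq s, [set f in s] = edges_in W, attached [set u] s, size s = k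
      & W \subset u |: \bigcup_(f <- s) f]].
Proof.
elim: k => [_ | k IH k_lt].
  exists [set u], [::]; split; rewrite ?set11 ?sub1set ?inE ?connect0 ?cards1 //.
    by move=> x y /set1P-> /set1P->; apply: connect0.
  split=> //; last by rewrite eqxx.
  apply/esym/setP => f; rewrite !inE; apply/negbTE/negP => /andP[/edgesP[x [y [rxy ->]]]].
  by rewrite subUset !sub1set !inE => /andP[/eqP xu /eqP yu]; move: rxy; rewrite xu yu r_irr.
have [W [s [uW WC cardW W_conn [s_uniq sE s_att s_size Ws]]]] := IH (ltnW k_lt).
have [x xC xW] : exists2 x, x \in component u & x \notin W.
  by apply/subsetPn/negP => /subset_leq_card; rewrite cardW leqNgt k_lt.
have [a [b [aW bW rab]]] : exists a b, [/\ a \in W, b \notin W & r a b].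
  by apply: connect_exit uW xW _; rewrite inE in xC.
have to_a z : z \in b |: W -> connect (induced (b |: W)) z a.
  case/setU1P => [-> | zW].
    by apply: connect1; rewrite /= r_sym rab !inE eqxx aW !orbT.
  have: connect (induced W) z a by exact: W_conn.
  apply: connect_sub => y w /and3P[ryw yW wW]; apply: connect1.
  by rewrite /= ryw !inE yW wW !orbT.
exists (b |: W), (rcons s [set a; b]); split.
- exact: setU1r.
- rewrite subUset WC sub1set inE andbT; apply: connect_trans (connect1 rab).
  by have := subsetP WC a aW; rewrite inE.
- by rewrite cardsU1 bW cardW.
- move=> y z /to_a ya /to_a za; apply: connect_trans ya _.
  by rewrite (sym_connect_sym (@induced_sym _)).
split.
- rewrite rcons_uniq s_uniq andbT; apply: contra bW => abs.
  by move: abs; rewrite -[_ \in s]in_set sE inE subUset !sub1set => /andP[_ /andP[_ ->]].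
- apply/setP => f; rewrite (edges_in_setU1 W_conn aW bW rab) !inE mem_rcons inE.
  by rewrite -[f \in s]in_set sE inE.
- rewrite attached_rcons s_att; apply/set0Pn; exists a; rewrite !inE eqxx /=.
  by have := subsetP Ws a aW; rewrite !inE.
- by rewrite size_rcons s_size.
rewrite bigcup_rcons subUset sub1set !inE eqxx !orbT /=.
by apply: subset_trans Ws _; rewrite setUS ?subsetUl.
Qed.

Lemma forest_component u :
  #|edges_in (component u)|.+1 = #|component u| /\
  0 < narr #|edges_in (component u)| (edges_in (component u)) (attached [set u]).
Proof.
have C_gt0 : 0 < #|component u| by apply/card_gt0P; exists u; rewrite inE connect0.
have k_lt : #|component u|.-1 < #|component u| by rewrite ltn_predL.
have [W [s [_ WC cardW _ [s_uniq sE s_att s_size _]]]] := forest_grow k_lt.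
have WE : W = component u by apply/setP/subset_cardP; rewrite ?cardW ?prednK.
rewrite -WE -sE cardsE (card_uniqP s_uniq) s_size prednK //; split; first by rewrite WE.
by rewrite -s_size; apply: narr_gt0.
Qed.

Definition cut x y := [rel a b | r a b && ([set a; b] != [set x; y])].

Lemma cut_sym x y : symmetric (cut x y).
Proof. by move=> a b /=; rewrite r_sym setUC. Qed.

Lemma cut_irr x y : irreflexive (cut x y).
Proof. by move=> a /=; rewrite r_irr. Qed.

Lemma cut_acyclic x y p : ~~ [&& 2 < size p, uniq p & cycle (cut x y) p].
Proof.
apply: contra (r_acyclic p) => /and3P[-> -> p_cycle] /=.
by apply: sub_cycle p_cycle => a b /andP[].
Qed.

Lemma cutC x y : cut x y =2 cut y x.
Proof. by move=> a b /=; rewrite (setUC [set x]). Qed.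

Lemma forest_bridge x y : r x y -> ~~ connect (cut x y) x y.
Proof.
move=> rxy; apply/negP => /connectP[p p_path]; case/shortenP: p_path => q q_path q_uniq _.
case: q q_path q_uniq => [|c [|d q]] /= q_path q_uniq y_last.
- by move: rxy; rewrite y_last r_irr.
- by move: q_path; rewrite y_last eqxx !andbF.
case/negP: (r_acyclic [:: x, c, d & q]) => /=.
case/andP: q_path => /andP[rxc _] /andP[/andP[rcd _] q_path].
rewrite q_uniq rxc rcd rcons_path -y_last r_sym rxy andbT /=.
by apply: sub_path q_path => a b /andP[].
Qed.

End Forest.

Section TreeSides.
Variables (V : finType) (e : rel V).
Hypothesis e_tree : is_tree e.

Let e_sym : symmetric e. Proof. by case: e_tree => [[]]. Qed.
Let e_irr : irreflexive e. Proof. by case: e_tree => [[]]. Qed.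
Let e_conn : forall x y, connect e x y. Proof. by case: e_tree => _ []. Qed.
Let e_acyclic : forall p : seq V, ~~ [&& 2 < size p, uniq p & cycle e p].
Proof. by case: e_tree => _ []. Qed.

Definition side x y := component (cut e x y) x.

Lemma side_self x y : x \in side x y.
Proof. by rewrite inE connect0. Qed.

Lemma side_edge x y a b : e a b -> [set a; b] != [set x; y] ->
  a \in side x y -> b \in side x y.
Proof.
move=> eab ab_ne; rewrite !inE => xa.
by apply: connect_trans xa (connect1 _); rewrite /= eab.
Qed.

Variables u v : V.
Hypothesis e_uv : e u v.

Lemma side_notin : v \notin side u v.
Proof. by rewrite inE (forest_bridge e_sym e_irr e_acyclic e_uv). Qed.

Lemma side_disjoint w : w \in side u v -> w \notin side v u.
Proof.
rewrite !inE (eq_connect (cutC e v u)) => uw; apply: contra side_notin => vw.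
by rewrite inE (connect_trans uw) // (sym_connect_sym (cut_sym e_sym u v)).
Qed.

Lemma side_cover w : (w \in side u v) || (w \in side v u).
Proof.
have cl : closed e (side u v :|: side v u).
  apply: intro_closed => [|x y exy]; first exact: sym_connect_sym.
  have [xy_uv _ | xy_ne] := eqVneq [set x; y] [set u; v].
    have : y \in [set u; v] by rewrite -xy_uv set22.
    by case/set2P=> ->; rewrite inE side_self ?orbT.
  have xy_ne' : [set x; y] != [set v; u] by rewrite (setUC [set v]).
  by case/setUP=> xS; apply/setUP; [left | right]; apply: side_edge xS.
by have := closed_connect cl (e_conn v w); rewrite !inE connect0 orbT => <-.
Qed.

Lemma card_sides : #|V| = #|side u v| + #|side v u|.
Proof.
rewrite -(cardsC (side u v)); congr (_ + _); apply: eq_card => w; rewrite inE.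
by have := side_cover w; case: (boolP (w \in side u v)) => // /side_disjoint /negPf->.
Qed.

Lemma edge_sides f : f \in edges e ->
  [|| f == [set u; v], f \subset side u v | f \subset side v u].
Proof.
case/edgesP => x [y [exy ->]]; have [//|xy_ne /=] := eqVneq [set x; y] [set u; v].
have xy_ne' : [set x; y] != [set v; u] by rewrite (setUC [set v]).
rewrite !subUset !sub1set; case/orP: (side_cover x) => xS.
  by rewrite xS (side_edge exy xy_ne xS).
by rewrite xS (side_edge exy xy_ne' xS) orbT.
Qed.

Lemma descendant_side w : descendant e v u w = (w \in side u v).
Proof.
have uv : u != v by apply: contraTneq e_uv => ->; rewrite e_irr.
apply/idP/idP.
  case/existsP => k /existsP[t]; move: (tval t) => {k t} p /and4P[p_path /eqP <- p_uniq].
  rewrite inE (negPf uv) /= => up; case/splitPr: up p_path p_uniq => p1 p2.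
  rewrite cat_path last_cat /= => /and3P[_ _ p2_path] /andP[v_out _].
  have v_out2 : v \notin u :: p2 by apply: contra v_out; rewrite mem_cat orbC => ->.
  rewrite inE; apply/connectP; exists p2 => //.
  apply: (sub_in_path (P := predC1 v)) p2_path; last first.
    by apply/allP => z z_in /=; apply: contraNneq v_out2 => <-.
  move=> a b /= av bv eab; rewrite eab /=; apply: contraNneq av => ab_uv.
  move: bv; have : v \in [set a; b] by rewrite ab_uv set22.
  by case/set2P=> <-; rewrite // inE eqxx.
rewrite inE => /connectP[p p_path w_last].
case/shortenP: p_path w_last => q q_path q_uniq _ w_last.
have v_out : v \notin q.
  apply: contra side_notin => vq; rewrite inE; apply/connectP.
  case/splitPr: vq q_path => q1 q2; rewrite cat_path => /andP[q1_path /andP[lv _]].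
  by exists (rcons q1 v); rewrite ?rcons_path ?q1_path ?last_rcons.
have vuq_uniq : uniq [:: v, u & q].
  by rewrite cons_uniq q_uniq andbT inE negb_or eq_sym uv.
have size_lt : size (u :: q) < #|V|.
  by have := max_card (mem [:: v, u & q]); rewrite (card_uniqP vuq_uniq).
apply/existsP; exists (Ordinal size_lt); apply/existsP; exists (in_tuple (u :: q)).
apply/and4P; split=> //; last by rewrite !inE eqxx orbT.
- by rewrite /= e_sym e_uv (sub_path _ q_path) // => a b /andP[].
- by rewrite /= w_last.
Qed.

End TreeSides.

Section TreeShellings.
Variables (V : finType) (e : rel V).
Hypothesis e_tree : is_tree e.

Let e_sym : symmetric e. Proof. by case: e_tree => [[]]. Qed.
Let e_irr : irreflexive e. Proof. by case: e_tree => [[]]. Qed.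
Let e_acyclic : forall p : seq V, ~~ [&& 2 < size p, uniq p & cycle e p].
Proof. by case: e_tree => _ []. Qed.

Definition side_edges x y := edges_in (cut e x y) (side e x y).

Lemma side_edges_component x y :
  #|side_edges x y|.+1 = #|side e x y| /\
  0 < narr #|side_edges x y| (side_edges x y) (attached [set x]).
Proof.
exact: forest_component (cut_sym e_sym x y) (cut_irr e_irr x y) (cut_acyclic e_acyclic x y) x.
Qed.

Lemma mem_side_edges x y f : e x y ->
  (f \in side_edges x y) = (f \in edges e) && (f \subset side e x y).
Proof.
move=> exy; rewrite !inE; case f_side: (f \subset side e x y); rewrite ?andbF ?andbT //.
apply/edgesP/edgesP => -[a [b [eab fE]]]; exists a, b; split=> //; first by case/andP: eab.
rewrite /= eab; apply: contraNneq (side_notin e_tree exy) => ab_xy.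
by apply: (subsetP f_side); rewrite fE ab_xy set22.
Qed.

Variables u v : V.
Hypothesis e_uv : e u v.
Let e_vu : e v u. Proof. by rewrite e_sym. Qed.

Lemma uv_notin_side_edges : [set u; v] \notin side_edges u v.
Proof.
by rewrite mem_side_edges // subUset !sub1set (negPf (side_notin e_tree e_uv)) !andbF.
Qed.

Lemma edges_sideI :
  edges e :&: ([set u; v] |: side_edges u v) = [set u; v] |: side_edges u v.
Proof.
apply/setIidPr; rewrite subUset sub1set; apply/andP; split.
  by apply/edgesP; exists u, v.
by apply/subsetP => f; rewrite mem_side_edges // => /andP[].
Qed.

Lemma edges_sideD : edges e :\: ([set u; v] |: side_edges u v) = side_edges v u.
Proof.
apply/setP => f; rewrite in_setD in_setU1 !mem_side_edges //.
case f_edge: (f \in edges e); rewrite ?andbF //= andbT; apply/idP/idP.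
  case/norP=> f_uv f_side; have := edge_sides e_tree u v f_edge.
  by rewrite (negPf f_uv) (negPf f_side).
move=> f_vu; apply/norP; split.
  by apply: contraTneq f_vu => ->; rewrite subUset sub1set (negPf (side_notin e_tree e_vu)).
case/edgesP: f_edge f_vu => a [b [_ ->]]; rewrite !subUset !sub1set => /andP[a_vu _].
by apply/negP => /andP[a_uv _]; move: (side_disjoint e_tree e_uv a_uv); rewrite a_vu.
Qed.

Lemma card_edges : #|edges e| = (#|side_edges u v| + #|side_edges v u|).+1.
Proof.
rewrite -(cardsID ([set u; v] |: side_edges u v)) edges_sideI edges_sideD.
by rewrite cardsU1 uv_notin_side_edges.
Qed.

Lemma Fshell_sides : Fshell e v =
  'C(#|edges e|, #|side_edges u v|.+1)
    * narr #|side_edges u v| (side_edges u v) (attached [set u])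
    * narr #|side_edges v u| (side_edges v u) (attached [set v]).
Proof.
set S := [set u; v] |: side_edges u v.
have in_side_vu g : g \in edges e -> g \notin S -> g \subset side e v u.
  move=> g_edge gS; have : g \in edges e :\: S by rewrite in_setD gS.
  by rewrite edges_sideD mem_side_edges // => /andP[].
have v_out f : f \in side_edges u v -> v \notin f.
  rewrite mem_side_edges // => /andP[_ /subsetP f_side].
  by apply: contra (side_notin e_tree e_uv); apply: f_side.
rewrite Fshell_narr; last by rewrite card_edges.
rewrite (eq_narr_in _ (P2 := fun s => attached [set v] [seq f <- s | f \in S]
                                   && attached [set v] [seq f <- s | f \notin S])); last first.
  move=> s /allP s_edges; rewrite -{1}(setUid [set v]).
  apply: (attached_split (X := [set v])) => //; try by move=> f _ _; rewrite subsetIr.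
  move=> f g fs gs fS gS; apply/subsetP => z /setIP[zf zg].
  have z_vu := subsetP (in_side_vu g (s_edges g gs) gS) z zg.
  case/setU1P: fS => [f_uv | f_side].
    move: zf; rewrite f_uv !inE => /orP[/eqP zu | //].
    by move: z_vu; rewrite zu (negPf (side_notin e_tree e_vu)).
  move: f_side; rewrite mem_side_edges // => /andP[_ /subsetP/(_ z zf) z_uv].
  by move: z_vu; rewrite (negPf (side_disjoint e_tree e_uv z_uv)).
have uv_v : [set u; v] :&: [set v] != set0.
  by apply/set0Pn; exists v; rewrite !inE eqxx orbT.
have f_v f : f \in side_edges u v -> f :&: [set v] = set0.
  by move/v_out => vf; apply/disjoint_setI0; rewrite disjoint_sym disjoints1.
rewrite (narr_shuffle S) // edges_sideI edges_sideD cardsU1 uv_notin_side_edges.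
rewrite narr_setU1; last 2 first.
- exact: uv_notin_side_edges.
- by move=> f /f_v fv s; rewrite /= fv eqxx.
congr (_ * _ * _); apply: eq_narr_in => s /allP s_side /=.
rewrite uv_v (_ : v |: [set u; v] = v |: [set u]) ?attached_setU1 // => [f /s_side/v_out //|].
by apply/setP => z; rewrite !inE; case: (z == v); rewrite ?orbT ?orbF.
Qed.

End TreeShellings.

Lemma Fshell_ratio (V : finType) (e : rel V) (u v : V) : is_tree e -> e u v ->
  Fshell e v * #|side e u v| = Fshell e u * #|side e v u| /\ 0 < Fshell e u.
Proof.
move=> e_tree e_uv; have e_vu : e v u by case: e_tree => [[e_sym _] _]; rewrite e_sym.
have [<- X_gt0] := side_edges_component e_tree u v.
have [<- Y_gt0] := side_edges_component e_tree v u.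
rewrite (Fshell_sides e_tree e_uv) (Fshell_sides e_tree e_vu) (card_edges e_tree e_uv).
set a := #|side_edges e u v|; set b := #|side_edges e v u|.
set X := narr a _ _ in X_gt0 *; set Y := narr b _ _ in Y_gt0 *.
split; last by rewrite !muln_gt0 X_gt0 Y_gt0 bin_gt0 ltnS leq_addl.
transitivity ('C((a + b).+1, a.+1) * a.+1 * (X * Y)); first by ring.
by rewrite mul_bin_swap; ring.
Qed.

Import GRing.Theory Num.Theory.
Local Open Scope ring_scope.

Theorem corollary3p5 (V : finType) (e : rel V) (u v : V) :
  is_tree e -> (2 <= #|V|)%N -> e u v ->
  ((Fshell e v)%:R / (Fshell e u)%:R : rat)
    = (subtree_size e u v)%:R / (subtree_size e v u)%:R
  /\ ((subtree_size e u v)%:R / (subtree_size e v u)%:R : rat)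
    = (subtree_size e u v)%:R / (#|V|%:R - (subtree_size e u v)%:R).
Proof.
move=> e_tree _ e_uv.
have e_vu : e v u by case: e_tree => [[e_sym _] _]; rewrite e_sym.
have size_u : subtree_size e v u = #|side e u v|.
  by apply: eq_card => w; rewrite inE (descendant_side e_tree e_uv).
have size_v : subtree_size e u v = #|side e v u|.
  by apply: eq_card => w; rewrite inE (descendant_side e_tree e_vu).
have side_gt0 : (0 < #|side e u v|)%N by apply/card_gt0P; exists u; apply: side_self.
have [ratio Fu_gt0] := Fshell_ratio e_tree e_uv.
rewrite size_u size_v (card_sides e_tree e_uv) natrD addrK; split=> //.
apply/eqP; rewrite eqr_div ?pnatr_eq0 -?lt0n // -!natrM eqr_nat.
by rewrite ratio mulnC.
Qed.
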